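(* Let $G=(V,E,\omega)\in\mathcal{G}$ and $\gamma\geq 0$. Let $\{\tau_k\}_{k\in\mathbb{N}}$ be a sequence of positive real numbers with $\tau_k\to0$ as $k\to\infty$, and let $\{u_k\}_{k\in\mathbb{N}}\subset\mathcal K$ be a sequence for which there is $C>0$ such that $\tilde J_{\tau_k}(u_k)\leq C$ for all $k\in\mathbb{N}$. Then there exist a subsequence $\{u_{k_l}\}_{l\in\mathbb{N}}$ and $u\in\mathcal V^b$ such that $u_{k_l}\to u$ as $l\to\infty$.
   Context: $\mathcal{G}$ is the set of finite, simple, connected, undirected, edge-weighted graphs $G=(V,E,\omega)$ with $V=\{1,\dots,n\}$, $n\geq 2$, weights $\omega_{ij}=\omega_{ji}>0$ for $(i,j)\in E$ and $\omega_{ij}=0$ otherwise. Degrees $d_i=\sum_j\omega_{ij}$. $\mathcal V$: functions $u:V\to\mathbb R$. Fixed $r\in[0,1]$; $\langle u,v\rangle_{\mathcal V}=\sum_i d_i^r u_iv_i$. $(\Delta u)_i=d_i^{-r}\sum_j\omega_{ij}(u_i-u_j)$. $\chi_S$ indicator of $S$. $\mathcal M(u)=\sum_i d_i^ru_i$, $\mathcal A(u)=\frac{\mathcal M(u)}{\sum_i d_i^r}\chi_V$. For $u\in\mathcal V$ let $\varphi$ be the unique solution of $\Delta\varphi=u-\mathcal A(u)$, $\mathcal M(\varphi)=0$, and $Lu:=\Delta u+\gamma\varphi$; $e^{-\tau L}$ its exponential. $\mathcal V^b$: $\{0,1\}$-valued functions; $\mathcal K$: $[0,1]$-valued functions. For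 $\tau>0$, $\tilde J_\tau(u)=\frac1\tau\langle\chi_V-u,e^{-\tau L}u\rangle_{\mathcal V}$ for $u\in\mathcal K$. Convergence in $\mathcal V$ is in the norm induced by $\langle\cdot,\cdot\rangle_{\mathcal V}$. *)

From HB Require Import structures.
From mathcomp Require Import all_boot all_order all_algebra.
From mathcomp Require Import all_classical all_reals all_analysis.
Set Implicit Arguments. Unset Strict Implicit. Unset Printing Implicit Defensive.
Import Order.TTheory GRing.Theory Num.Theory.
Import numFieldNormedType.Exports.
Local Open Scope ring_scope.
Local Open Scope classical_set_scope.

Section GraphDefs.
Variables (R : realType) (n : nat).

(* G = (V, E, w) in the class \mathcal G, V = 'I_n, edges = pairs with w i j > 0 *)
Definition is_graph (w : 'I_n -> 'I_n -> R) : Prop :=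
  [/\ (2 <= n)%N,
      (forall i j, w i j = w j i),
      (forall i j, 0 <= w i j),
      (forall i, w i i = 0) &
      (forall i j, connect (fun a b => 0 < w a b) i j)].

Definition deg (w : 'I_n -> 'I_n -> R) (i : 'I_n) : R := \sum_j w i j.

Definition ipV (r : R) w (u v : 'I_n -> R) : R :=
  \sum_i (deg w i `^ r) * u i * v i.
Definition normV (r : R) w (u : 'I_n -> R) : R := Num.sqrt (ipV r w u u).

Definition lapl (r : R) w (u : 'I_n -> R) : 'I_n -> R :=
  fun i => (deg w i `^ r)^-1 * \sum_j w i j * (u i - u j).

Definition mass (r : R) w (u : 'I_n -> R) : R := \sum_i deg w i `^ r * u i.

Definition avg (r : R) w (u : 'I_n -> R) : 'I_n -> R :=
  fun _ => mass r w u / \sum_i deg w i `^ r.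

Definition phi (r : R) w (u : 'I_n -> R) : 'I_n -> R :=
  get [set p : 'I_n -> R | lapl r w p = (fun i => u i - avg r w u i)
                          /\ mass r w p = 0].

Definition Lop (r gam : R) w (u : 'I_n -> R) : 'I_n -> R :=
  fun i => lapl r w u i + gam * phi r w u i.

Definition Lmx (r gam : R) w : 'M[R]_n :=
  \matrix_(i, j) Lop r gam w (fun k => (k == j)%:R) i.

Definition expmx (A : 'M[R]_n) : 'M[R]_n :=
  \matrix_(i, j) limn (fun N => (\sum_(k < N) ((k`!)%:R)^-1 *: A ^+ k) i j).

Definition mxapp (M : 'M[R]_n) (u : 'I_n -> R) : 'I_n -> R :=
  fun i => \sum_j M i j * u j.

Definition heatL (r gam : R) w (tau : R) (u : 'I_n -> R) : 'I_n -> R :=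
  mxapp (expmx (- tau *: Lmx r gam w)) u.

Definition Jtilde (r gam : R) w (tau : R) (u : 'I_n -> R) : R :=
  tau^-1 * ipV r w (fun i => 1 - u i) (heatL r gam w tau u).

End GraphDefs.

From HB Require Import structures.
From mathcomp Require Import all_boot all_order all_algebra.
From mathcomp Require Import all_classical all_reals all_analysis.
From mathcomp Require Import lra.
Import Order.TTheory GRing.Theory Num.Theory.
Import numFieldNormedType.Exports.
Set Implicit Arguments. Unset Strict Implicit. Unset Printing Implicit Defensive.
Local Open Scope ring_scope.
Local Open Scope classical_set_scope.

(* Bolzano-Weierstrass gives a subsequence u_(k_l) converging pointwise to
   some v with values in [0,1].  Since L is a fixed matrix, e^{-tau L} tends
   to the identity as tau -> 0, so tau_(k_l) * J_tau(u_(k_l)) =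
   <1 - u_(k_l), e^{-tau L} u_(k_l)> tends to <1 - v, v> =
   sum_i d_i^r (1 - v_i) v_i, while it is bounded by C tau_(k_l) -> 0.  A sum of
   nonnegative terms with d_i^r > 0 vanishes only if every v_i is 0 or 1. *)

Lemma increasing_seq_ge (f : nat -> nat) : increasing_seq f -> forall n, (n <= f n)%N.
Proof.
move=> /increasing_seqP hf; elim=> // n IH; exact: leq_ltn_trans IH (hf n).
Qed.

Lemma increasing_seq_cvgny (f : nat -> nat) : increasing_seq f -> f @ \oo --> \oo.
Proof.
move=> hf; apply/cvgnyPge => A; exists A => // m /= Am.
exact: leq_trans Am (increasing_seq_ge hf m).
Qed.

Lemma increasing_seq_comp (f g : nat -> nat) :
  increasing_seq f -> increasing_seq g -> increasing_seq (f \o g).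
Proof. by move=> hf hg a b /=; rewrite hf -leEnat hg. Qed.

Lemma cvg_subseq {T : topologicalType} (f : nat -> nat) (u : nat -> T) (a : T) :
  increasing_seq f -> u @ \oo --> a -> u \o f @ \oo --> a.
Proof. by move=> /increasing_seq_cvgny; apply: cvg_comp. Qed.

Lemma bolzano_weierstrass_fin (R : realType) (I : finType) (u : nat -> I -> R) M :
  (forall k i, `|u k i| <= M) ->
  exists2 f : nat -> nat, increasing_seq f & forall i, cvgn (fun l => u (f l) i).
Proof.
move=> uM.
suff [f hf cvgf] : exists2 f : nat -> nat, increasing_seq f &
    forall i, i \in enum I -> cvgn (fun l => u (f l) i).
  by exists f => // i; apply: cvgf; rewrite mem_enum.
elim: (enum I) => [|i s [f hf cvgf]]; first by exists id.
have bnd : bounded_fun (fun l => u (f l) i).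
  exists M; split; first exact: num_real.
  by move=> x Mx l _; apply: le_trans (uM _ _) (ltW Mx).
have [g hg cvgg] := bolzano_weierstrass bnd.
exists (f \o g); first exact: increasing_seq_comp.
move=> j; rewrite inE => /orP[/eqP-> //|js].
have /cvg_ex[/= a fa] := cvgf j js.
by apply/cvg_ex; exists a; exact: (cvg_subseq hg fa).
Qed.

Section MatrixExponential.
Variables (R : realType) (n : nat).

Lemma mx_pow_entry_le (A : 'M[R]_n) b : 0 <= b -> (forall i j, `|A i j| <= b) ->
  forall k i j, `|(A ^+ k) i j| <= (n%:R * b) ^+ k.
Proof.
move=> b0 Ab; elim=> [|k IH] i j.
  by rewrite expr0 mxE; case: (i == j); rewrite ?normr1 ?normr0.
rewrite exprSr -mulmxE mxE (le_trans (ler_norm_sum _ _ _)) //.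
apply: (@le_trans _ _ (\sum_(l < n) (n%:R * b) ^+ k * b)).
  by apply: ler_sum => l _; rewrite normrM ler_pM.
by rewrite sumr_const card_ord exprSr -mulrnAr -[b *+ n]mulr_natl.
Qed.

Lemma sumr_expr_le2 (x : R) N : 0 <= x <= 1/2 -> \sum_(k < N) x ^+ k <= 2.
Proof.
move=> /andP[x0 x1].
have s0 : 0 <= \sum_(k < N) x ^+ k by apply: sumr_ge0 => k _; rewrite exprn_ge0.
have := subrX1 x N; have := exprn_ge0 N x0; nra.
Qed.

Lemma expmx_entryE (B : 'M[R]_n) i j :
  expmx B i j = limn (series (fun k => (k`!%:R)^-1 * (B ^+ k) i j)).
Proof.
rewrite /expmx mxE; congr (lim (_ @ \oo)); apply/funext => N.
by rewrite summxE /series /= big_mkord; apply: eq_bigr => k _; rewrite mxE.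
Qed.

Lemma expmx_entry_near_id (B : 'M[R]_n) b i j : 0 <= b ->
  (forall i j, `|B i j| <= b) -> n%:R * b <= 1/2 ->
  `|expmx B i j - (i == j)%:R| <= 2 * (n%:R * b).
Proof.
move=> b0 Bb; set x := n%:R * b => x_half.
have x0 : 0 <= x by rewrite mulr_ge0.
pose t k := (k`!%:R)^-1 * (B ^+ k) i j.
have t_le k : `|t k| <= x ^+ k / k`!%:R.
  rewrite /t normrM normfV normr_nat mulrC ler_pM ?invr_ge0 //.
  exact: mx_pow_entry_le.
have cvg_t : cvgn (series t).
  apply: normed_cvg; apply: (@series_le_cvg _ _ (exp_coeff x)) => //.
  - by move=> k; exact: normr_ge0.
  - by move=> k; exact: exp_coeff_ge0.
  - exact: is_cvg_series_exp_coeff.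
(* the k = 0 term is the identity entry, the others are bounded by x ^+ k *)
have partial_le N : `|series t N.+1 - (i == j)%:R| <= 2 * x.
  rewrite /series /= big_nat_recl // /t fact0 invr1 mul1r expr0 mxE addrAC subrr add0r.
  apply: (le_trans (ler_norm_sum _ _ _)).
  apply: (@le_trans _ _ (\sum_(0 <= k < N) x * x ^+ k)).
    apply: ler_sum => k _; rewrite -exprS (le_trans (t_le k.+1)) //.
    by rewrite ler_pdivrMr ?ltr0n ?fact_gt0 // ler_peMr ?exprn_ge0 // ler1n fact_gt0.
  rewrite big_mkord -mulr_sumr mulrC ler_wpM2r //; apply: sumr_expr_le2.
  by rewrite x0.
rewrite expmx_entryE.
apply: (ler_cvg_to (cvg_norm (cvgB cvg_t (cvg_cst _))) (cvg_cst _)).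
by exists 1%N => // -[|N] // _; exact: partial_le.
Qed.

Lemma mx_entry_le_norm (A : 'M[R]_n) i j : `|A i j| <= `|A|.
Proof. by rewrite /Num.norm /= mx_normrE (le_bigmax _ _ (i, j)). Qed.

Lemma expmx_scale_cvg_id (A : 'M[R]_n) (t : nat -> R) : t @ \oo --> 0 ->
  forall i j, (fun k => expmx (t k *: A) i j) @ \oo --> ((i == j)%:R : R).
Proof.
move=> t0 i j; set c := n%:R * `|A|.
have ct0 : (fun k => c * `|t k|) @ \oo --> 0.
  by rewrite -(mulr0 c); apply: cvgM; [exact: cvg_cst | exact/norm_cvg0P].
have entry_le k : forall i j, `|(t k *: A) i j| <= `|A| * `|t k|.
  by move=> i' j'; rewrite mxE normrM mulrC ler_wpM2r ?mx_entry_le_norm.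
apply/subr_cvg0/norm_cvg0P.
apply: (@squeeze_cvgr _ _ _ _ (cst 0) (fun k => 2 * (c * `|t k|))); last 2 first.
- exact: cvg_cst.
- by rewrite -(mulr0 2); apply: cvgM => //; exact: cvg_cst.
near=> k; rewrite normr_ge0 /= -[c * _]mulrA.
apply: (@expmx_entry_near_id _ _ i j _ (entry_le k)); first by rewrite mulr_ge0.
rewrite mulrA ltW //; near: k; apply: (cvgr_lt 0 ct0 (1/2)); lra.
Unshelve. all: end_near.
Qed.

End MatrixExponential.

Lemma cvg_sumr (R : realType) (T : Type) (F : set_system T) {FF : Filter F}
    (I : finType) (f : I -> T -> R) (a : I -> R) :
  (forall i, f i @ F --> a i) -> (fun x => \sum_i f i x) @ F --> \sum_i a i.
Proof.
by move=> fa; apply: (@cvg_big _ _ +%R 0 predT add_continuous) => // i _; exact: fa.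
Qed.

Section GraphFunctions.
Variables (R : realType) (n : nat).
Implicit Types (w : 'I_n -> 'I_n -> R) (f g : nat -> 'I_n -> R) (a b : 'I_n -> R).

Lemma mxapp_cvg (M : nat -> 'M[R]_n) (M0 : 'M[R]_n) f a :
  (forall i j, (fun k => M k i j) @ \oo --> M0 i j) ->
  (forall j, (fun k => f k j) @ \oo --> a j) ->
  forall i, (fun k => mxapp (M k) (f k) i) @ \oo --> mxapp M0 a i.
Proof. by move=> MM0 fa i; apply: cvg_sumr => j; apply: cvgM. Qed.

Lemma mxapp1 a : mxapp 1 a = a.
Proof.
apply/funext => i; rewrite /mxapp (bigD1 i) //= mxE eqxx mul1r big1 ?addr0 //.
by move=> j /negbTE ji; rewrite mxE eq_sym ji mul0r.
Qed.

Lemma heatL_cvg r gam w (tau : nat -> R) f a :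
  tau @ \oo --> 0 -> (forall i, (fun k => f k i) @ \oo --> a i) ->
  forall i, (fun k => heatL r gam w (tau k) (f k) i) @ \oo --> a i.
Proof.
move=> tau0 fa i; rewrite -(mxapp1 a).
apply: mxapp_cvg fa i => i j; rewrite mxE.
by apply: expmx_scale_cvg_id; rewrite -oppr0; apply: cvgN.
Qed.

Lemma ipV_cvg r w f g a b :
  (forall i, (fun k => f k i) @ \oo --> a i) ->
  (forall i, (fun k => g k i) @ \oo --> b i) ->
  (fun k => ipV r w (f k) (g k)) @ \oo --> ipV r w a b.
Proof.
move=> fa gb; apply: cvg_sumr => i.
by apply: cvgM => //; apply: cvgM => //; exact: cvg_cst.
Qed.

Lemma normV_cvg0 r w f :
  (forall i, (fun k => f k i) @ \oo --> 0) ->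
  (fun k => normV r w (f k)) @ \oo --> 0.
Proof.
move=> f0; have ipV0 : ipV r w (fun=> 0) (fun=> 0) = 0.
  by rewrite /ipV big1 // => i _; rewrite mulr0.
have := cvg_comp _ _ (@ipV_cvg r w _ _ _ _ f0 f0) (@sqrt_continuous R _).
by rewrite ipV0 sqrtr0.
Qed.

Lemma deg_gt0 w : is_graph w -> forall i, 0 < deg w i.
Proof.
case=> n2 _ w_ge0 _ w_conn i.
have [j ji] : exists j : 'I_n, j != i.
  have n0 : (0 < n)%N by apply: ltn_trans n2.
  have [->|i0] := eqVneq i (Ordinal n0); first by exists (Ordinal n2).
  by exists (Ordinal n0); rewrite eq_sym.
have /connectP[[|a p] /= wp ej] := w_conn i j; first by rewrite ej eqxx in ji.
move: wp => /andP[wia _].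
rewrite /deg (bigD1 a) //= ltr_pwDl ?sumr_ge0 //.
Qed.

Lemma ipV_compl_le0_binary r w a : is_graph w ->
  (forall i, 0 <= a i <= 1) -> ipV r w (fun i => 1 - a i) a <= 0 ->
  forall i, a i = 0 \/ a i = 1.
Proof.
move=> hw a01 le0 i.
have term_ge0 j : 0 <= deg w j `^ r * (1 - a j) * a j.
  by have /andP[? ?] := a01 j; rewrite !mulr_ge0 ?powR_ge0 ?subr_ge0.
have ipV0 : ipV r w (fun i => 1 - a i) a = 0.
  by apply/eqP; rewrite eq_le le0 sumr_ge0.
move: ipV0 => /(psumr_eq0P (fun j _ => term_ge0 j))/(_ i isT)/eqP.
rewrite !mulf_eq0 gt_eqF ?powR_gt0 ?deg_gt0 //= subr_eq0.
by case/orP => /eqP; [right | left].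
Qed.

End GraphFunctions.

Theorem theorem5p23 (R : realType) (n : nat) (w : 'I_n -> 'I_n -> R)
    (r gam : R) (tau : nat -> R) (u : nat -> 'I_n -> R) (C : R) :
  is_graph w ->
  0 <= r <= 1 ->
  0 <= gam ->
  (forall k, 0 < tau k) ->
  tau @ \oo --> (0 : R) ->
  (forall k i, 0 <= u k i <= 1) ->
  0 < C ->
  (forall k, Jtilde r gam w (tau k) (u k) <= C) ->
  exists (kl : nat -> nat) (v : 'I_n -> R),
    [/\ (forall l, (kl l < kl l.+1)%N),
        (forall i, v i = 0 \/ v i = 1) &
        (fun l => normV r w (fun i => u (kl l) i - v i)) @ \oo --> (0 : R)].
Proof.
move=> hw _ _ tau_gt0 tau0 u01 _ J_le.
have u_le1 k i : `|u k i| <= 1 by have /andP[? ?] := u01 k i; rewrite ger0_norm.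
have [f f_incr u_f_cvg] := bolzano_weierstrass_fin u_le1.
pose v i := limn (fun l => u (f l) i).
have u_f_v i : (fun l => u (f l) i) @ \oo --> v i := u_f_cvg i.
have v01 i : 0 <= v i <= 1.
  apply/andP; split; [apply: (ler_cvg_to (cvg_cst 0) (u_f_v i))
                     | apply: (ler_cvg_to (u_f_v i) (cvg_cst (1 : R)))];
    by apply: nearW => l; have /andP[] := u01 (f l) i.
have tau_f0 : tau \o f @ \oo --> 0 := cvg_subseq f_incr tau0.
have ipV_le0 : ipV r w (fun i => 1 - v i) v <= 0.
  have ipV_f : (fun l => ipV r w (fun i => 1 - u (f l) i)
                   (heatL r gam w (tau (f l)) (u (f l)))) @ \oo -->
               ipV r w (fun i => 1 - v i) v.
    apply: ipV_cvg => i; first exact: cvgB (cvg_cst _) (u_f_v i).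
    exact: heatL_cvg tau_f0 u_f_v i.
  have Ctau_f0 : (fun l => C * tau (f l)) @ \oo --> 0.
    by rewrite -(mulr0 C); apply: cvgM => //; exact: cvg_cst.
  apply: (ler_cvg_to ipV_f Ctau_f0); apply: nearW => l.
  by have := J_le (f l); rewrite /Jtilde mulrC ler_pdivrMr.
exists f, v; split.
- by move/increasing_seqP: f_incr.
- exact: ipV_compl_le0_binary hw v01 ipV_le0.
- by apply: normV_cvg0 => i; apply/subr_cvg0.
Qed.
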